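(* Let $X_1,\dots,X_d$ be disjoint finite nonempty sets, $X$ their product, $S\subseteq[d]$ with $|S|\ge 2$, and $Z\subseteq X$ such that $\pi_{[d]-S}(Z)$ is a single point. Let $\delta>0$ with $|Z|\ge \delta\cdot|\pi_S(X)|$, and suppose $|X_i|\ge n$ for every $i\in S$. Then for every $\epsilon>0$, \[\frac{|\mathscr{G}_S(\epsilon, Z)|}{|\mathscr{G}_S(Z)|} \le \exp\left( |\pi_S(X)| \cdot \left(-\delta \epsilon^2 + 2^{|S|+2}\cdot n^{-1/2^{|S|}}\right)\right).\]
   Context: $[d]=\{1,\dots,d\}$; $\pi_T$ denotes projection of $X$ (or of $\overline{X}_S$) onto the factors indexed by $T$, so $\pi_S(X)=\prod_{i\in S}X_i$. $\overline{X}_S=\prod_{i=1}^d W_i$ with $W_i=X_i\times X_i$ for $i\in S$ and $W_i=X_i$ otherwise. For $\bar x\in\overline{X}_S$, $\widehat{x}(\emptyset)$ is the set of points $y\in X$ with $\pi_i(y)$ one of the two entries of the pair $\pi_i(\bar x)$ for $i\in S$ and $\pi_i(y)=\pi_i(\bar x)$ for $i\notin S$. For $F:Z\to\mathbb{F}_2$ define $dF$ on $\{\bar x\in\overline{X}_S:\widehat{x}(\emptyset)\subseteq Z\}$ by $dF(\bar x)=\sum_{x\in\widehat{x}(\emptyset)}F(x)$ if $|\widehat{x}(\emptyset)|=2^{|S|}$ and $dF(\bar x)=0$ otherwise. $\mathscr{G}_S(Z)$ is the set of all functions $dF$ as $F$ ranges over functions $Z\to\mathbb{F}_2$, and $\mathscr{G}_S(\epsilon,Z)$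 is the set of $g\in\mathscr{G}_S(Z)$ expressible as $g=dF$ for some $F$ equal to $1$ on more than $(0.5+\epsilon)|Z|$ or fewer than $(0.5-\epsilon)|Z|$ points of $Z$. *)

From HB Require Import structures.
From mathcomp Require Import all_boot all_order all_algebra.
From mathcomp Require Import reals exp sequences.
Set Implicit Arguments. Unset Strict Implicit. Unset Printing Implicit Defensive.
Import Order.TTheory GRing.Theory Num.Theory.
Local Open Scope ring_scope.

Section Defs.
(* The factors X_1, ..., X_d are the finite types T i, i : 'I_d. *)
Variables (d : nat) (T : 'I_d -> finType) (S : {set 'I_d}).

Definition prodX : finType := {dffun forall i : 'I_d, T i}.

Definition Wf (i : 'I_d) : finType :=
  if i \in S then (T i * T i)%type : finType else T i.

Definition Xbar : finType := {dffun forall i : 'I_d, Wf i}.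

Definition coord_ok (i : 'I_d) : Wf i -> T i -> bool :=
  (if i \in S as b return (if b then (T i * T i)%type : finType else T i) -> T i -> bool
   then fun p y => (y == p.1) || (y == p.2)
   else fun w y => y == w).

Definition xhat (xb : Xbar) : {set prodX} :=
  [set y : prodX | [forall i, coord_ok (xb i) (y i)]].

(* dF, for F : Z -> F_2 (only the values of F on Z matter), as a function on
   {xb | xhat xb \subset Z}; it is represented as a total function on Xbar
   that is 0 outside this domain (an injective encoding of functions on
   the domain). *)
Definition dF (Z : {set prodX}) (F : {ffun prodX -> 'F_2}) : {ffun Xbar -> 'F_2} :=
  [ffun xb => if (xhat xb \subset Z) && (#|xhat xb| == 2 ^ #|S|)%N
              then \sum_(x in xhat xb) F x else 0].

Definition GS (Z : {set prodX}) : {set {ffun Xbar -> 'F_2}} :=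
  [set dF Z F | F : {ffun prodX -> 'F_2}].

Definition GSeps (R : realType) (eps : R) (Z : {set prodX}) :
    {set {ffun Xbar -> 'F_2}} :=
  [set dF Z F | F : {ffun prodX -> 'F_2} &
     let k := (#|[set z in Z | F z == 1]|)%:R : R in
     ((1/2 + eps) * #|Z|%:R < k) || (k < (1/2 - eps) * #|Z|%:R)].

End Defs.

From HB Require Import structures.
From mathcomp Require Import all_boot all_order all_algebra.
From mathcomp Require Import reals exp sequences.
From mathcomp Require Import ring lra zify.
Import Order.TTheory GRing.Theory Num.Theory.
Local Open Scope ring_scope.
Set Implicit Arguments. Unset Strict Implicit. Unset Printing Implicit Defensive.

(* On functions vanishing off Z, d is F_2-linear, so |G_S(Z)| >= 2^|Z| / |ker d|.
   Order the points of X.  A function F in ker d is determined by its values on the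
   points of Z that are not the top vertex of a full box contained in Z: at a top
   vertex z, dF = 0 expresses F z through lower vertices.  These points form a box-free
   subset of the fiber of Z over pi_{[d]-S}, and a Kovari-Sos-Turan argument (count
   pairs of points on common lines in one direction by Cauchy-Schwarz, then induct on
   |S|) bounds their number by |S| |pi_S(X)| n^(-1/2^|S|).  Dually, G_S(eps, Z) is the
   image of the unbalanced functions on Z, of which there are at most
   2 2^|Z| exp(-eps^2 |Z|) by the exponential moment method.  Dividing, and using
   |Z| >= delta |pi_S(X)|, gives the bound. *)

Lemma sqr_sum_leq_card_sum_sqr (I : finType) (C : {set I}) (m : I -> nat) :
  ((\sum_(c in C) m c) ^ 2 <= #|C| * \sum_(c in C) m c ^ 2)%N.
Proof.
rewrite -(leq_pmul2l (isT : 0 < 2)%N).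
have -> : (2 * (\sum_(c in C) m c) ^ 2 = \sum_(c in C) \sum_(c' in C) 2 * (m c * m c'))%N.
  rewrite -mulnn big_distrl big_distrr /=; apply: eq_bigr => c _.
  by rewrite !big_distrr.
have -> : (2 * (#|C| * \sum_(c in C) m c ^ 2) =
           \sum_(c in C) \sum_(c' in C) (m c ^ 2 + m c' ^ 2))%N.
  symmetry; under eq_bigr => c _ do rewrite big_split /= sum_nat_const.
  by rewrite big_split /= sum_nat_const -big_distrr /=; lia.
by apply: leq_sum => c _; apply: leq_sum => c' _; rewrite nat_Cauchy.
Qed.

Lemma sqr_card_leq_collisions (X Y : finType) (f : X -> Y) (B : {set X}) :
  (#|B| ^ 2 <= #|f @: B| * \sum_(x in B) #|[set x' in B | f x' == f x]|)%N.
Proof.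
pose m c := #|[set x in B | f x == c]|.
have fB x : x \in B -> f x \in f @: B by move=> xB; apply: imset_f.
have -> : #|B| = (\sum_(c in f @: B) m c)%N.
  rewrite -sum1_card (partition_big f (mem (f @: B))) //=; apply: eq_bigr => c _.
  by rewrite /m -sum1_card; apply: eq_bigl => x; rewrite inE.
rewrite (partition_big f (mem (f @: B))) //=; apply: leq_trans (sqr_sum_leq_card_sum_sqr _ _) _.
rewrite leq_mul2l; apply/orP; right; apply: leq_sum => c _.
rewrite (eq_bigr (fun=> m c)) => [|x /andP[_ /eqP ->]] //.
rewrite (eq_bigl (fun x => x \in [set x in B | f x == c])) => [|x]; last by rewrite inE.
by rewrite sum_nat_const mulnn.
Qed.

Lemma card_leq_imset_fibers (A B : finType) (f : A -> B) (D : {set A}) (m : nat) :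
  (forall x, x \in D -> #|[set x' in D | f x' == f x]| <= m)%N -> (#|D| <= #|f @: D| * m)%N.
Proof.
move=> hm; rewrite -sum1_card (partition_big f (mem (f @: D))) => [|x xD]; last exact: imset_f.
rewrite -sum_nat_const; apply: leq_sum => _ /imsetP [x xD ->].
by rewrite sum1dep_card hm.
Qed.

Lemma leq_bound_prodn (I : finType) (A : {set I}) (c : I -> nat) (n : nat) :
  (0 < n)%N -> A != set0 -> (forall i, i \in A -> n <= c i)%N -> (n <= \prod_(i in A) c i)%N.
Proof.
move=> n0 /set0Pn [i0 i0A] hc; rewrite (bigD1 i0) //=; apply: leq_trans (hc i0 i0A) _.
rewrite leq_pmulr //; apply: prodn_cond_gt0 => i /andP [iA _]; exact: leq_trans n0 (hc i iA).
Qed.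

Lemma kst_step_ineq (R : realFieldType) (k b m P Q v : R) :
  0 <= k -> 0 <= b -> 0 <= P -> 0 <= v ->
  b ^+ 2 <= P * Q -> Q <= b + m ^+ 2 * (k * P * v ^+ 2) -> b <= m * P ->
  1 <= m * v ^+ 2 -> b <= (k + 1) * (m * P) * v.
Proof.
move=> k0 b0 P0 v0 hCS hQ hb hmv.
have m0 : 0 <= m by nra.
have hPb : P * b <= (m * P * v) ^+ 2.
  apply: le_trans (ler_wpM2l P0 hb) _.
  rewrite [X in _ <= X](_ : _ = (m * P * P) * (m * v ^+ 2)); last by ring.
  rewrite [X in X <= _](_ : _ = (m * P * P) * 1); last by ring.
  by apply: ler_wpM2l => //; rewrite !mulr_ge0.
have hPQ : P * Q <= P * b + k * (m * P * v) ^+ 2.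
  have -> : P * b + k * (m * P * v) ^+ 2 = P * (b + m ^+ 2 * (k * P * v ^+ 2)) by ring.
  exact: ler_wpM2l.
have hb2 : b ^+ 2 <= ((k + 1) * (m * P) * v) ^+ 2.
  have X0 : 0 <= (m * P * v) ^+ 2 := sqr_ge0 _.
  apply: le_trans (_ : (k + 1) * (m * P * v) ^+ 2 <= _); first by nra.
  rewrite [X in _ <= X](_ : _ = (k + 1) ^+ 2 * (m * P * v) ^+ 2); last by ring.
  by apply: ler_wpM2r => //; nra.
by rewrite -(ler_pXn2r (isT : (0 < 2)%N)) // nnegrE !mulr_ge0 // addr_ge0.
Qed.

Lemma exp2_le_expR (R : realType) (k : nat) : (2 : R) ^+ k <= expR k%:R.
Proof.
rewrite -[k%:R]mulr1 expRM_natl; apply: lerXn2r; rewrite ?nnegrE ?expR_ge0 //.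
by have := expR_ge1Dx (1 : R).
Qed.

Lemma ratio_le_expR (R : realType) (nG nE z b P : nat) (eps delta w : R) :
  (2 ^ z <= nG * 2 ^ b)%N -> nE%:R <= 2 * (2 ^+ z * expR (- (eps ^+ 2 * z%:R))) ->
  b.+1%:R <= w * P%:R -> delta * P%:R <= z%:R ->
  nE%:R / nG%:R <= expR (P%:R * (- delta * eps ^+ 2 + w)).
Proof.
move=> hG hE hc hz.
have nG0 : (0 < nG)%N by move: hG; case: nG => //; rewrite mul0n leqn0 expn_eq0.
rewrite ler_pdivrMr ?ltr0n //; apply: le_trans hE _.
have h2z : (2 : R) ^+ z <= nG%:R * 2 ^+ b by rewrite -!natrX -natrM ler_nat.
set E := expR (- (eps ^+ 2 * z%:R)).
apply: le_trans (_ : nG%:R * (2 ^+ b.+1 * E) <= _).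
  have -> : nG%:R * (2 ^+ b.+1 * E) = 2 * (nG%:R * 2 ^+ b * E) by rewrite exprS; ring.
  by rewrite ler_wpM2l // ler_wpM2r ?expR_ge0.
rewrite mulrC ler_wpM2r ?ler0n //.
apply: le_trans (ler_wpM2r (expR_ge0 _) (exp2_le_expR _ _)) _.
rewrite -expRD ler_expR.
have : delta * P%:R * eps ^+ 2 <= z%:R * eps ^+ 2 by apply: ler_wpM2r => //; exact: sqr_ge0.
have -> : P%:R * (- delta * eps ^+ 2 + w) = w * P%:R - delta * P%:R * eps ^+ 2 by ring.
lra.
Qed.

Lemma succ_le_pow2_mul (R : realFieldType) (b s P n m : nat) (v : R) :
  (0 < m)%N -> (n <= P)%N -> 0 <= v -> v <= 1 -> n%:R * v ^+ m = 1 ->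
  b%:R <= s%:R * P%:R * v -> b.+1%:R <= 2 ^+ (s + 2) * v * P%:R.
Proof.
move=> m0 nP v0 v1 hv hb.
have hPv : 1 <= P%:R * v.
  rewrite -[X in X <= _]hv; apply: ler_pM; rewrite ?ler0n ?exprn_ge0 ?ler_nat //.
  by rewrite -[X in _ <= X]expr1 ler_wiXn2l.
apply: le_trans (_ : s.+1%:R * (P%:R * v) <= _); first by rewrite -!natr1 mulrDl mul1r mulrA lerD.
rewrite mulrAC -[X in _ <= X]mulrA ler_wpM2r ?mulr_ge0 ?ler0n // -natrX ler_nat.
by apply: leq_trans (ltn_expl s (isT : (1 < 2)%N)) _; rewrite leq_exp2l // leq_addr.
Qed.

Lemma powR_recip_bounds (R : realType) (n m : nat) : (0 < n)%N -> (0 < m)%N ->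
  let v : R := n%:R `^ (- m%:R^-1) in [/\ 0 <= v, v <= 1 & n%:R * v ^+ m = 1].
Proof.
move=> n0 m0 v; have n1 : (1 : R) <= n%:R by rewrite ler1n.
split; first exact: powR_ge0.
  rewrite /v -[X in _ <= X](powRr0 n%:R); apply: ler_powR => //.
  by rewrite oppr_le0 invr_ge0.
rewrite /v -powR_mulrn ?powR_ge0 // -powRrM mulNr mulVf ?pnatr_eq0 -?lt0n // powR_inv1 ?ler0n //.
by rewrite mulfV // pnatr_eq0 -lt0n.
Qed.

Lemma sum_F2 (V : nmodType) (h : 'F_2 -> V) : \sum_b h b = h 0 + h 1.
Proof. by rewrite big_ord_recl big_ord1; congr (h _ + h _); apply/val_inj. Qed.

Lemma expR_plus_expRN_le (R : realType) (e : R) : 0 <= e -> e <= 1/2 ->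
  expR e + expR (- e) <= 2 * expR (e ^+ 2).
Proof.
(* With [e = 2 a]: [expR (+-e) = expR (+-a) ^+ 2] and [expR (+-a) * (1 -+ a) <= 1]. *)
move=> e0 e1.
set a := e / 2; set x := expR a; set y := expR (- a).
have xy : x * y = 1 by rewrite /x /y expRxMexpNx_1.
have ex : expR e = x ^+ 2 by rewrite /x -expRM_natl; congr expR; rewrite /a; field.
have ey : expR (- e) = y ^+ 2 by rewrite /y -expRM_natl; congr expR; rewrite /a; field.
have x0 : 0 <= x by exact: expR_ge0.
have y0 : 0 <= y by exact: expR_ge0.
have hx : x * (1 - a) <= 1 by rewrite -[X in _ <= X]xy; apply: ler_wpM2l => //; exact: expR_ge1Dx.
have hy : y * (1 + a) <= 1 by rewrite -[X in _ <= X]xy mulrC; apply: ler_wpM2r => //; exact: expR_ge1Dx.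
have he : 1 + e ^+ 2 <= expR (e ^+ 2) by exact: expR_ge1Dx.
apply: le_trans (_ : 2 * (1 + e ^+ 2) <= _); last by lra.
have a14 : a <= 1/4 by rewrite /a; lra.
have a0 : 0 <= a by rewrite /a; lra.
have hp : 0 < (1 - a ^+ 2) ^+ 2 by apply: exprn_gt0; nra.
rewrite ex ey -(ler_pM2r hp).
have -> : (x ^+ 2 + y ^+ 2) * (1 - a ^+ 2) ^+ 2 =
  (x * (1 - a)) ^+ 2 * (1 + a) ^+ 2 + (y * (1 + a)) ^+ 2 * (1 - a) ^+ 2 by ring.
have hx2 : (x * (1 - a)) ^+ 2 <= 1 by rewrite -(expr1n _ 2); apply: lerXn2r; rewrite ?nnegrE //; nra.
have hy2 : (y * (1 + a)) ^+ 2 <= 1 by rewrite -(expr1n _ 2); apply: lerXn2r; rewrite ?nnegrE //; nra.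
have ee : e = 2 * a by rewrite /a; field.
apply: le_trans (_ : (1 + a) ^+ 2 + (1 - a) ^+ 2 <= _).
  by apply: lerD; rewrite -[X in _ <= X]mul1r; apply: ler_wpM2r => //; exact: sqr_ge0.
have a2 : a ^+ 2 <= 1/16 by nra.
rewrite ee; nra.
Qed.

Section Points.
Variables (d : nat) (T : 'I_d -> finType).
Implicit Types (x y p q : prodX T) (A : {set 'I_d}).

Definition upd x (j : 'I_d) (a : T j) : prodX T := [ffun i => dfwith x a i].

Lemma upd_eq x j (a : T j) : upd x a j = a.
Proof. by rewrite ffunE dfwith_in. Qed.

Lemma upd_neq x j (a : T j) i : i != j -> upd x a i = x i.
Proof. by move=> ij; rewrite ffunE dfwith_out // eq_sym. Qed.

Lemma upd_id x j : upd x (x j) = x.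
Proof. by apply/ffunP => i; rewrite ffunE; case: dfwithP. Qed.

Lemma upd_upd x j (a b : T j) : upd (upd x a) b = upd x b.
Proof.
apply/ffunP => i; have [->|ij] := eqVneq i j; first by rewrite !upd_eq.
by rewrite !upd_neq.
Qed.

Lemma upd_inj x j : injective (@upd x j).
Proof. by move=> a b /(congr1 (fun z : prodX T => z j)); rewrite !upd_eq. Qed.

Definition fiber A y := setXn (fun i => if i \in A then setT else [set y i]).
Definition cube p q := setXn (fun i => [set p i; q i]).

Lemma fiberP A y x : reflect (forall i, i \notin A -> x i = y i) (x \in fiber A y).
Proof.
apply: (iffP setXnP) => H i; last by case: ifPn => [|/H ->]; rewrite inE.
by move=> iA; have := H i; rewrite (negbTE iA) inE => /eqP.
Qed.

Lemma cubeP p q x : reflect (forall i, x i = p i \/ x i = q i) (x \in cube p q).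
Proof.
apply: (iffP setXnP) => H i; first by have /set2P := H i.
by apply/set2P; apply: H.
Qed.

Lemma card_fiber A y : #|fiber A y| = (\prod_(i in A) #|T i|)%N.
Proof.
rewrite cardsXn (bigID (mem A)) /= [X in (_ * X)%N]big1 ?muln1 => [|i /negbTE->]; last exact: cards1.
by apply: eq_bigr => i ->; rewrite cardsT.
Qed.

Lemma upd_fiber A y x j (a : T j) : x \in fiber A y -> upd x a \in fiber (A :\ j) (upd y a).
Proof.
move=> /fiberP xy; apply/fiberP => i; rewrite !inE negb_and negbK.
have [-> _|ij /= iA] := eqVneq i j; first by rewrite !upd_eq.
by rewrite !upd_neq // xy.
Qed.

Definition box A p q := forall i, (p i != q i) = (i \in A).

Lemma card_cube A p q : box A p q -> #|cube p q| = (2 ^ #|A|)%N.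
Proof.
move=> hpq; rewrite cardsXn -prod_nat_const (bigID (mem A)) /= [X in (_ * X)%N]big1 ?muln1.
  by apply: eq_bigr => i iA; rewrite cards2 hpq iA.
by move=> i iA; rewrite cards2 hpq (negbTE iA).
Qed.

Lemma cube_l p q : p \in cube p q.
Proof. by apply/cubeP => i; left. Qed.

Definition boxfree A (B : {set prodX T}) := forall p q, box A p q -> ~~ (cube p q \subset B).

Lemma cube_refl p : cube p p = [set p].
Proof.
apply/setP => x; rewrite in_set1; apply/cubeP/eqP => [H|-> i]; last by left.
by apply/ffunP => i; case: (H i).
Qed.

Lemma boxfree0 (B : {set prodX T}) : boxfree set0 B -> B = set0.
Proof.
move=> hB; apply/setP => x; rewrite inE; apply/negbTE/negP => xB.
have /negP := hB x x (fun i => ltac:(by rewrite eqxx inE)).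
by rewrite cube_refl sub1set.
Qed.

Section Lines.
Variables (j : 'I_d) (B : {set prodX T}).

Definition linked (a a' : T j) := [set x in B | (x j == a) && (upd x a' \in B)].

Lemma sum_linked_diag : (\sum_a #|linked a a| = #|B|)%N.
Proof.
rewrite -sum1_card (partition_big (fun x : prodX T => x j) predT) //=; apply: eq_bigr => a _.
rewrite -sum1_card; apply: eq_bigl => x; rewrite !inE.
by have [<-|] := eqVneq (x j) a; rewrite ?upd_id ?andbb ?andbF ?andbT.
Qed.

Lemma sum_collisions_linked (c : T j) :
  (\sum_(x in B) #|[set x' in B | upd x' c == upd x c]| = \sum_a' \sum_a #|linked a a'|)%N.
Proof.
have card_line x : #|[set x' in B | upd x' c == upd x c]| = #|[set a' : T j | upd x a' \in B]|.
  rewrite -(card_imset _ (@upd_inj x j)); apply: eq_card => x'; rewrite !inE.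
  apply/andP/imsetP => [[x'B /eqP e] | [a' aB ->]]; last by rewrite inE in aB; rewrite aB upd_upd.
  have ex' : upd x (x' j) = x' by rewrite -[RHS](upd_id _ j) -(upd_upd x' c) e upd_upd.
  by exists (x' j); rewrite ?inE ex'.
under eq_bigr => x _ do rewrite card_line -sum1_card big_mkcond /=.
rewrite exchange_big /=; apply: eq_bigr => a' _.
rewrite (partition_big (fun x : prodX T => x j) predT) //=; apply: eq_bigr => a _.
rewrite -sum1_card big_mkcond [RHS]big_mkcond; apply: eq_bigr => x _; rewrite !inE.
by case: (x \in B); case: (x j == a); case: (upd x a' \in B).
Qed.

Lemma linked_sub_fiber A y a a' :
  B \subset fiber A y -> linked a a' \subset fiber (A :\ j) (upd y a).
Proof.
move=> /subsetP hB; apply/subsetP => x /setIdP [xB /andP [/eqP <- _]].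
by rewrite -{1}(upd_id x j); apply/upd_fiber/hB.
Qed.

Lemma sqr_card_le_linked A y : B \subset fiber A y ->
  (#|B| ^ 2 <= (\prod_(i in A :\ j) #|T i|) * \sum_a' \sum_a #|linked a a'|)%N.
Proof.
move=> /subsetP hB; rewrite -(sum_collisions_linked (y j)).
apply: leq_trans (sqr_card_leq_collisions (fun x => upd x (y j)) B) _.
rewrite leq_mul2r -(card_fiber (A :\ j) y) subset_leq_card ?orbT //.
apply/subsetP => _ /imsetP [x xB ->].
by rewrite -[in fiber _ y](upd_id y j); apply/upd_fiber/hB.
Qed.

Lemma sum_linked_le (R : numDomainType) (M : R) : 0 <= M ->
  (forall a a', a != a' -> #|linked a a'|%:R <= M) ->
  (\sum_a' \sum_a #|linked a a'|)%:R <= #|B|%:R + (#|T j| ^ 2)%:R * M.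
Proof.
move=> M0 hoff; apply: le_trans (_ : \sum_a' (#|linked a' a'|%:R + #|T j|%:R * M) <= _).
  rewrite natr_sum; apply: ler_sum => a' _; rewrite natr_sum (bigD1 a') //= lerD2l.
  apply: le_trans (_ : \sum_(a | a != a') M <= _); first by apply: ler_sum => a; apply: hoff.
  by rewrite mulr_natl -sumr_const [X in _ <= X](bigD1 a') //= lerDr.
rewrite big_split /= -natr_sum sum_linked_diag lerD2l sumr_const.
by rewrite -mulrnAl -mulr_natr -natrM mulnn.
Qed.

Lemma linked_boxfree A a a' :
  j \in A -> boxfree A B -> a != a' -> boxfree (A :\ j) (linked a a').
Proof.
move=> jA hB aa' p q hpq; apply/negP => /subsetP hsub.
have /setIdP [_ /andP [/eqP pa _]] := hsub p (cube_l p q).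
have hpq' : box A p (upd q a').
  move=> i; have [->|ij] := eqVneq i j; first by rewrite upd_eq pa aa' jA.
  by rewrite upd_neq // hpq !inE ij.
apply: (negP (hB _ _ hpq')); apply/subsetP => x /cubeP hx.
have xa : upd x a \in cube p q.
  apply/cubeP => i; have [->|ij] := eqVneq i j; first by rewrite upd_eq pa; left.
  by rewrite upd_neq //; case: (hx i) => ->; [left | right; rewrite upd_neq].
have /setIdP [xaB /andP [_ xa'B]] := hsub _ xa.
have [xj|xj] : x j = a \/ x j = a' by case: (hx j) => ->; [left | right; rewrite upd_eq].
  by rewrite -(upd_id x j) xj.
by rewrite -(upd_id x j) xj -(upd_upd x a).
Qed.

End Lines.

Lemma boxfree_card_le (R : realFieldType) (n : nat) (v : R) A (B : {set prodX T}) y :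
  B \subset fiber A y -> boxfree A B -> (forall i, i \in A -> n <= #|T i|)%N ->
  0 <= v -> v <= 1 -> 1 <= n%:R * v ^+ (2 ^ #|A|) ->
  #|B|%:R <= #|A|%:R * (\prod_(i in A) #|T i|)%:R * v.
Proof.
move Ak : #|A| => k; elim: k A B y v Ak => [|k IH] A B y v Ak hB hfree hn v0 v1 hv.
  move/eqP: Ak; rewrite cards_eq0 => /eqP A0; rewrite A0 in hfree.
  by rewrite (boxfree0 hfree) cards0 !mul0r.
have [j jA] : exists j, j \in A by apply/set0Pn; rewrite -card_gt0 Ak.
set A' := A :\ j; set P' := (\prod_(i in A') #|T i|)%N; set nj := #|T j|.
have A'k : #|A'| = k by move: Ak; rewrite (cardsD1 j A) jA add1n => -[].
have hP : (\prod_(i in A) #|T i| = nj * P')%N.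
  by rewrite (bigD1 j) //=; congr (_ * _)%N; apply: eq_bigl => i; rewrite !inE andbC.
have hBP : (#|B| <= nj * P')%N by rewrite -hP -(card_fiber A y) subset_leq_card.
set Q := (\sum_(a' : T j) \sum_(a : T j) #|linked B a a'|)%N.
set M := k%:R * P'%:R * v ^+ 2.
have hoff (a a' : T j) : a != a' -> #|linked B a a'|%:R <= M.
  move=> aa'; apply: (IH A' _ (upd y a)) => //.
  - exact: linked_sub_fiber.
  - exact: linked_boxfree.
  - by move=> i /setD1P [_ /hn].
  - exact: exprn_ge0.
  - exact: exprn_ile1.
  - by rewrite -exprM -expnS; exact: hv.
have hQ : (Q%:R : R) <= #|B|%:R + (nj ^ 2)%:R * M.
  by apply: sum_linked_le => //; rewrite !mulr_ge0 ?exprn_ge0.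
have hnv : 1 <= nj%:R * v ^+ 2.
  apply: le_trans hv _; apply: ler_pM; rewrite ?ler0n ?exprn_ge0 ?ler_nat ?hn //.
  by apply: ler_wiXn2l => //; rewrite expnS leq_pmulr // expn_gt0.
rewrite hP natrM -natr1; apply: (kst_step_ineq (Q := Q%:R)); rewrite ?ler0n //.
- by rewrite -natrX -natrM ler_nat (sqr_card_le_linked _ hB).
- by rewrite natrX in hQ.
- by rewrite -natrM ler_nat.
Qed.

End Points.

Section Balance.
Variables (X : finType) (Z : {set X}).
Implicit Types F : {ffun X -> 'F_2}.

Definition vanishing_off : {set {ffun X -> 'F_2}} := [set F : {ffun X -> 'F_2} | [forall x in ~: Z, F x == 0]].

Lemma vanishing_offP F : reflect (forall x, x \notin Z -> F x = 0) (F \in vanishing_off).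
Proof.
rewrite inE; apply: (iffP forall_inP) => H x; last by rewrite inE => /H ->.
by move=> xZ; apply/eqP/H; rewrite inE.
Qed.

Lemma card_vanishing_off : #|vanishing_off| = (2 ^ #|Z|)%N.
Proof.
rewrite -[in RHS](card_Fp (isT : prime 2)) -(card_pffun_on 0 Z predT).
apply: eq_card => F; apply/vanishing_offP/pffun_onP => [H|[/subsetP H _] x]; last first.
  by apply: contraNeq => Fx; apply: H; rewrite inE.
by split=> //; apply/subsetP => x; rewrite inE; apply: contraR => /H ->.
Qed.

Definition restrict F : {ffun X -> 'F_2} := [ffun x => if x \in Z then F x else 0].

Lemma restrict_vanishing_off F : restrict F \in vanishing_off.
Proof. by apply/vanishing_offP => x /negbTE xZ; rewrite ffunE xZ. Qed.

Definition ones F := #|[set z in Z | F z == 1]|.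

Lemma ones_restrict F : ones (restrict F) = ones F.
Proof. by apply: eq_card => z; rewrite !inE ffunE; case: (z \in Z). Qed.

Lemma sum_vanishing_off_expR (R : realType) (mu : R) :
  \sum_(F in vanishing_off) expR ((ones F)%:R * mu) = (1 + expR mu) ^+ #|Z|.
Proof.
pose g x (b : 'F_2) : R := if x \in Z then (if b == 1 then expR mu else 1) else (b == 0)%:R.
have prod_g F : \prod_x g x (F x) = if F \in vanishing_off then expR ((ones F)%:R * mu) else 0.
  case: ifPn => [/vanishing_offP F0|]; last first.
    rewrite inE => /forall_inPn [x]; rewrite inE => /negbTE xZ Fx.
    by rewrite (bigD1 x) //= /g (negbTE Fx) xZ mul0r.
  rewrite expRM_natl -prodr_const /ones (bigID (mem Z)) /= [X in _ * X]big1 => [|x /negbTE xZ].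
    rewrite mulr1 big_mkcond [RHS]big_mkcond; apply: eq_bigr => x _.
    by rewrite /g inE; case: (x \in Z).
  by rewrite /g xZ F0 ?xZ.
have sum_g x : \sum_b g x b = if x \in Z then 1 + expR mu else 1.
  by rewrite sum_F2 /g; case: (x \in Z); rewrite ?addr0 ?add0r.
rewrite -prodr_const [RHS]big_mkcond /= (eq_bigr _ (fun x _ => esym (sum_g x))).
by rewrite bigA_distr_bigA big_mkcond /=; apply: eq_bigr => F _; rewrite prod_g.
Qed.

Lemma card_ones_exp_tail (R : realType) (mu c : R) :
  #|[set F in vanishing_off | c <= (ones F)%:R * mu]|%:R <= expR (- c) * (1 + expR mu) ^+ #|Z|.
Proof.
rewrite -sum_vanishing_off_expR mulr_sumr -sumr_const big_mkcond [X in _ <= X]big_mkcond /=.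
apply: ler_sum => F _; rewrite inE; case: (F \in vanishing_off) => //=.
case: ifPn => [hc|_]; last by rewrite mulr_ge0 ?expR_ge0.
by rewrite -expRD -[X in X <= _]expR0 ler_expR addrC subr_ge0.
Qed.

Lemma card_ones_tail (R : realType) (eps s : R) : 0 <= eps -> eps <= 1/2 -> s = 1 \/ s = -1 ->
  #|[set F in vanishing_off |
     #|Z|%:R * (s * eps + 2 * eps ^+ 2) <= (ones F)%:R * (s * (2 * eps))]|%:R
  <= 2 ^+ #|Z| * expR (- (eps ^+ 2 * #|Z|%:R)).
Proof.
(* The exponential moment with [mu = 2 s eps], at the threshold [(1/2 + s eps) |Z|]. *)
move=> eps0 eps1 hs; apply: le_trans (card_ones_exp_tail _ _) _.
rewrite -mulrN expRM_natl -exprMn mulrC -mulNr expRM_natr -exprMn.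
apply: lerXn2r; rewrite ?nnegrE ?mulr_ge0 ?addr_ge0 ?expR_ge0 ?ler01 //.
rewrite mulrC.
have -> : expR (- (s * eps + 2 * eps ^+ 2)) * (1 + expR (s * (2 * eps))) =
          expR (- (2 * eps ^+ 2)) * (expR eps + expR (- eps)).
  rewrite mulrDr mulr1 -expRD mulrDr -!expRD.
  by case: hs => ->; [rewrite addrC|]; congr (expR _ + expR _); ring.
apply: le_trans (ler_wpM2l (expR_ge0 _) (expR_plus_expRN_le eps0 eps1)) _.
by rewrite mulrC -mulrA -expRD ler_wpM2l // ler_expR; lra.
Qed.

Definition unbalanced (R : numFieldType) (eps : R) F : bool :=
  let k := (ones F)%:R : R in ((1/2 + eps) * #|Z|%:R < k) || (k < (1/2 - eps) * #|Z|%:R).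

Lemma card_unbalanced (R : realType) (eps : R) : 0 < eps ->
  #|[set F in vanishing_off | unbalanced eps F]|%:R
  <= 2 * (2 ^+ #|Z| * expR (- (eps ^+ 2 * #|Z|%:R))).
Proof.
move=> eps0; set N := #|Z|.
have [eps1|eps1] := leP eps (1/2); last first.
  rewrite (_ : [set F in _ | _] = set0) ?cards0 ?mulr_ge0 ?exprn_ge0 ?expR_ge0 //.
  apply/setP => F; rewrite !inE /unbalanced; apply/negbTE; rewrite negb_and negb_or -!leNgt.
  have k0 : (0 : R) <= (ones F)%:R := ler0n _ _.
  have kN : ((ones F)%:R : R) <= N%:R.
    by rewrite ler_nat subset_leq_card //; apply/subsetP => z; rewrite inE => /andP[].
  by apply/orP; right; apply/andP; split; nra.
set tail := fun s : R => [set F in vanishing_off |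
  N%:R * (s * eps + 2 * eps ^+ 2) <= (ones F)%:R * (s * (2 * eps))].
apply: le_trans (_ : (#|tail 1| + #|tail (-1)|)%:R <= _).
  rewrite ler_nat; apply: leq_trans _ (leq_card_setU (tail 1) (tail (-1))); apply: subset_leq_card.
  apply/subsetP => F; rewrite !inE => /andP [-> /orP [] hk] /=; [apply/orP; left | apply/orP; right]; nra.
by rewrite natrD mulr_natl mulr2n; apply: lerD; apply: card_ones_tail (ltW eps0) eps1 _; [left | right].
Qed.
End Balance.

Section Derivative.
Variables (d : nat) (T : 'I_d -> finType) (S : {set 'I_d}) (Z : {set prodX T}).
Implicit Types (F G : {ffun prodX T -> 'F_2}) (p q z : prodX T).

Lemma dFB F G : dF S Z (F - G) = dF S Z F - dF S Z G.
Proof.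
apply/ffunP => xb; rewrite !ffunE; case: ifP => _; last by rewrite subr0.
by rewrite -sumrB; apply: eq_bigr => x _; rewrite !ffunE.
Qed.

Lemma dF_restrict F : dF S Z (restrict Z F) = dF S Z F.
Proof.
apply/ffunP => xb; rewrite !ffunE; case: ifP => // /andP [/subsetP hs _].
by apply: eq_bigr => x /hs xZ; rewrite ffunE xZ.
Qed.

Definition xbar_of p q : Xbar T S :=
  [ffun i => match i \in S as b return (if b then (T i * T i)%type : finType else T i) with
             | true => (p i, q i) | false => p i end].

Lemma xhat_xbar_of p q : (forall i, i \notin S -> p i = q i) -> xhat (xbar_of p q) = cube p q.
Proof.
move=> hpq; apply/setP => y; rewrite inE; apply/forallP/cubeP => H i; have := H i;
  rewrite ffunE /coord_ok; have := hpq i; case: (i \in S) => /=.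
- by move=> _ /orP [] /eqP; [left | right].
- by move=> _ /eqP; left.
- by move=> _ [] ->; rewrite eqxx ?orbT.
- by move=> -> // [] ->.
Qed.

Definition top_of (xb : Xbar T S) z :=
  (z \in xhat xb) && [forall x in xhat xb, enum_rank x <= enum_rank z]%N.

Definition nontops : {set prodX T} :=
  [set z in Z | ~~ [exists xb, [&& xhat xb \subset Z, #|xhat xb| == 2 ^ #|S| & top_of xb z]%N]].

Lemma dF_eq0_nontops F : F \in vanishing_off Z -> dF S Z F = 0 ->
  {in nontops, forall z, F z = 0} -> F = 0.
Proof.
(* Induction on the rank of [z]: if [z] tops a full box in [Z], then [dF F = 0] there
   writes [F z] as a sum of values at lower points. *)
move=> /vanishing_offP hZ hd hB; apply/ffunP => z; rewrite ffunE.
move: {2}(enum_rank z : nat) (erefl (enum_rank z : nat)) => k; elim/ltn_ind: k z => k IH z zk.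
have [zZ|] := boolP (z \in Z); last exact: hZ.
have [/hB //|] := boolP (z \in nontops).
rewrite inE zZ negbK => /existsP [xb /and3P [hsub /eqP hc /andP [zx /forall_inP hmax]]].
have := congr1 (fun g : {ffun Xbar T S -> 'F_2} => g xb) hd.
rewrite !ffunE hsub hc eqxx /= (bigD1 z) //= big1 ?addr0 // => x /andP [xx xz].
apply: (IH _ _ x erefl); rewrite -zk ltn_neqAle hmax // andbT.
by rewrite (inj_eq (@ord_inj _)) (inj_eq enum_rank_inj).
Qed.

Lemma nontops_boxfree : boxfree S nontops.
Proof.
move=> p q hpq; apply/negP => hsub.
have hx : xhat (xbar_of p q) = cube p q.
  by apply: xhat_xbar_of => i iS; apply/eqP; rewrite -[_ == _]negbK hpq (negbTE iS).
have [z zc zmax] := @arg_maxnP _ p (mem (cube p q)) (fun x => enum_rank x : nat) (cube_l p q).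
have /setIdP [zZ /negP] := subsetP hsub z zc; apply; apply/existsP; exists (xbar_of p q).
rewrite hx (card_cube hpq) eqxx /top_of hx; apply/and4P; split=> //.
- by apply/subsetP => x /(subsetP hsub) /setIdP [].
- by apply/forall_inP => x; apply: zmax.
Qed.

Definition kerdF := [set F in vanishing_off Z | dF S Z F == 0].

Lemma card_kerdF : (#|kerdF| <= 2 ^ #|nontops|)%N.
Proof.
rewrite -card_vanishing_off -(card_in_imset (f := restrict nontops)).
  apply: subset_leq_card; apply/subsetP => _ /imsetP [F _ ->]; exact: restrict_vanishing_off.
move=> F G /setIdP [/vanishing_offP FZ /eqP dF0] /setIdP [/vanishing_offP GZ /eqP dG0] FG.
apply/eqP; rewrite -subr_eq0; apply/eqP/dF_eq0_nontops.
- by apply/vanishing_offP => x xZ; rewrite !ffunE FZ ?GZ ?subr0.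
- by rewrite dFB dF0 dG0 subr0.
- move=> x xB; have := congr1 (fun H : {ffun prodX T -> 'F_2} => H x) FG.
  by rewrite !ffunE xB => ->; rewrite subrr.
Qed.

Lemma exp2_leq_card_GS : (2 ^ #|Z| <= #|GS S Z| * 2 ^ #|nontops|)%N.
Proof.
rewrite -card_vanishing_off.
apply: leq_trans (card_leq_imset_fibers (f := dF S Z) (m := #|kerdF|) _) _.
  move=> F0 /vanishing_offP F0Z; rewrite -(card_imset _ (addIr (- F0))).
  apply: subset_leq_card; apply/subsetP => _ /imsetP [F /setIdP [/vanishing_offP FZ /eqP e] ->].
  apply/setIdP; split; last by rewrite dFB e subrr.
  by apply/vanishing_offP => x xZ; rewrite !ffunE FZ ?F0Z ?subr0.
apply: leq_mul card_kerdF; apply: subset_leq_card; apply/subsetP => _ /imsetP [F _ ->].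
exact: imset_f.
Qed.

Lemma leq_card_GSeps (R : realType) (eps : R) :
  (#|GSeps S eps Z| <= #|[set F in vanishing_off Z | unbalanced Z eps F]|)%N.
Proof.
apply: leq_trans (leq_imset_card (dF S Z) _); apply: subset_leq_card.
apply/subsetP => _ /imsetP [F hF ->]; apply/imsetP; exists (restrict Z F).
  by rewrite inE restrict_vanishing_off /unbalanced ones_restrict; rewrite inE in hF.
by rewrite dF_restrict.
Qed.

End Derivative.

Theorem proposition4p3 (R : realType) (d : nat) (T : 'I_d -> finType)
  (S : {set 'I_d}) (Z : {set prodX T}) (delta : R) (n : nat) :
  (forall i, 0 < #|T i|)%N ->
  (2 <= #|S|)%N ->
  (* pi_{[d]-S}(Z) is a single point *)
  (exists y : prodX T, [set z : prodX T | [forall (i | i \notin S), z i == y i]] :&: Z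
     = Z /\ Z != set0) ->
  0 < delta ->
  delta * (\prod_(i in S) #|T i|)%:R <= #|Z|%:R ->
  (0 < n)%N ->
  (forall i, i \in S -> n <= #|T i|)%N ->
  forall eps : R, 0 < eps ->
  (#|GSeps S eps Z|)%:R / (#|GS S Z|)%:R <=
  expR ((\prod_(i in S) #|T i|)%:R *
        (- delta * eps ^+ 2 + 2 ^+ (#|S| + 2) * powR n%:R (- (2 ^+ #|S|)^-1))).
Proof.
move=> _ hS [y [hyZ _]] delta0 hdens n0 hnT eps eps0.
set s := #|S|; set P := (\prod_(i in S) #|T i|)%N; set b := #|nontops S Z|.
have [v0 v1 hv] := powR_recip_bounds R n0 (expn_gt0 2 s).
rewrite -[2 ^+ s]natrX; set v := n%:R `^ _.
have hZ : nontops S Z \subset fiber S y.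
  apply/subsetP => z /setIdP [+ _]; rewrite -hyZ => /setIP [+ _]; rewrite inE => /forall_inP hz.
  by apply/fiberP => i /hz /eqP.
have hb : b%:R <= s%:R * P%:R * v.
  by apply: (boxfree_card_le hZ (nontops_boxfree Z) hnT v0 v1); rewrite hv.
have nP : (n <= P)%N by apply: leq_bound_prodn; rewrite // -card_gt0 (leq_trans _ hS).
have hE : #|GSeps S eps Z|%:R <= 2 * (2 ^+ #|Z| * expR (- (eps ^+ 2 * #|Z|%:R))).
  by apply: le_trans (card_unbalanced Z eps0); rewrite ler_nat leq_card_GSeps.
have hc := succ_le_pow2_mul (expn_gt0 2 s) nP v0 v1 hv hb.
exact: ratio_le_expR (exp2_leq_card_GS S Z) hE hc hdens.
Qed.
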